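(* Let $a>0$, $c>0$, and let $y$ be the solution of $\dot y(t)=\frac{c}{y(t)}-1$ with $y(0)=a$. Then for every $t\ge0$ with $t\ge a+c\log(a/c)$ we have $y(t)\le2c$. *)

From Stdlib Require Import Reals.
Open Scope R_scope.

Definition ode_solution (a c : R) (y : R -> R) : Prop :=
  y 0 = a /\
  (forall eps, 0 < eps -> exists delta, 0 < delta /\
      forall t, 0 <= t < delta -> Rabs (y t - a) < eps) /\
  (forall t, 0 <= t -> y t <> 0) /\
  (forall t, 0 < t -> derivable_pt_lim y t (c / y t - 1)).

From Stdlib Require Import Reals Lra.
Open Scope R_scope.

(* Along a solution, K(s) = (y(s) - c) e^((y(s) + s) / c) is constant: its derivative is
   e^((y+s)/c) (y' + (y - c)(y' + 1) / c) = e^((y+s)/c) (y y' + y - c) / c, which vanishes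
   because y y' = c - y.  Continuity of y at 0 gives K = (a - c) e^(a/c).  If y(t) > 2c then
   K(t) > c e^(t/c) >= c e^(a/c + ln(a/c)) = a e^(a/c) > (a - c) e^(a/c), a contradiction. *)

Definition first_integral (c u t : R) : R := (u - c) * exp ((u + t) / c).

Lemma exp_le_compat (x z : R) : x <= z -> exp x <= exp z.
Proof.
  intros Hxz; destruct (Rle_lt_or_eq_dec x z Hxz) as [Hlt | ->].
  - now left; apply exp_increasing.
  - apply Rle_refl.
Qed.

Definition right_limit (f : R -> R) (x0 l : R) : Prop :=
  forall eps, 0 < eps -> exists delta, 0 < delta /\
    forall x, x0 < x < x0 + delta -> Rabs (f x - l) < eps.

Lemma right_limit_unique (f g : R -> R) (x0 b l1 l2 : R) :
  right_limit f x0 l1 -> right_limit g x0 l2 ->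
  x0 < b -> (forall x, x0 < x <= b -> f x = g x) -> l1 = l2.
Proof.
  intros Hf Hg Hb Hfg.
  destruct (Req_dec l1 l2) as [Heq | Hneq]; [exact Heq | exfalso].
  set (eps := Rabs (l1 - l2) / 2).
  assert (Heps : 0 < eps) by (apply Rdiv_lt_0_compat; [apply Rabs_pos_lt; lra | lra]).
  destruct (Hf eps Heps) as [d1 [Hd1 Hf1]].
  destruct (Hg eps Heps) as [d2 [Hd2 Hg2]].
  set (x := x0 + Rmin (b - x0) (Rmin d1 d2) / 2).
  assert (Hmin : 0 < Rmin (b - x0) (Rmin d1 d2)) by (repeat apply Rmin_glb_lt; lra).
  pose proof (Rmin_l (b - x0) (Rmin d1 d2)).
  pose proof (Rmin_r (b - x0) (Rmin d1 d2)).
  pose proof (Rmin_l d1 d2). pose proof (Rmin_r d1 d2).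
  specialize (Hf1 x ltac:(unfold x; lra)).
  specialize (Hg2 x ltac:(unfold x; lra)).
  rewrite Hfg in Hf1 by (unfold x; lra).
  unfold eps in *; split_Rabs; lra.
Qed.

Lemma continuity_pt_right_limit (f : R -> R) (x0 : R) :
  continuity_pt f x0 -> right_limit f x0 (f x0).
Proof.
  intros Hf eps Heps.
  destruct (Hf eps Heps) as [delta [Hdelta Hclose]].
  exists delta; split; [exact Hdelta |].
  intros x Hx; apply (Hclose x); split.
  - split; [exact I | lra].
  - simpl; unfold R_dist; rewrite Rabs_right; lra.
Qed.

Lemma right_limit_comp (f g : R -> R) (x0 l : R) :
  right_limit f x0 l -> continuity_pt g l -> right_limit (fun x => g (f x)) x0 (g l).
Proof.
  intros Hf Hg eps Heps.
  destruct (Hg eps Heps) as [eta [Heta Hgclose]].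
  destruct (Hf eta Heta) as [delta [Hdelta Hfclose]].
  exists delta; split; [exact Hdelta |].
  intros x Hx.
  destruct (Req_dec (f x) l) as [-> | Hne].
  - rewrite Rminus_diag, Rabs_R0; exact Heps.
  - apply (Hgclose (f x)); split; [split; [exact I | auto] | exact (Hfclose x Hx)].
Qed.

Lemma first_integral_time_shift (c u t : R) :
  0 < c -> first_integral c u t = first_integral c u 0 * exp (t / c).
Proof.
  intros Hc; unfold first_integral.
  rewrite Rplus_0_r, Rmult_assoc, <- exp_plus.
  do 2 f_equal; field; lra.
Qed.

Lemma derivable_pt_lim_first_integral (c : R) (y : R -> R) (t dy : R) :
  c <> 0 -> derivable_pt_lim y t dy ->
  derivable_pt_lim (fun s => first_integral c (y s) s) t
    (dy * exp ((y t + t) / c) + (y t - c) * (exp ((y t + t) / c) * ((dy + 1) / c))).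
Proof.
  intros Hc Hy; unfold first_integral.
  apply (derivable_pt_lim_mult (fun s => y s - c) (fun s => exp ((y s + s) / c))).
  - replace dy with (dy - 0) at 1 by ring.
    apply (derivable_pt_lim_minus y (fct_cte c)); [exact Hy | apply derivable_pt_lim_const].
  - apply (derivable_pt_lim_comp (fun s => (y s + s) / c) exp); [| apply derivable_pt_lim_exp].
    replace ((dy + 1) / c) with ((dy + 1) * fct_cte (/ c) t + (y t + id t) * 0)
      by (unfold fct_cte; field; exact Hc).
    apply (derivable_pt_lim_mult (fun s => y s + id s) (fct_cte (/ c))).
    + apply (derivable_pt_lim_plus y id); [exact Hy | apply derivable_pt_lim_id].
    + apply derivable_pt_lim_const.
Qed.

Lemma first_integral_le_2c (a c u t : R) :
  0 < a -> 0 < c -> a + c * ln (a / c) <= t ->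
  first_integral c u t = first_integral c a 0 -> u <= 2 * c.
Proof.
  intros Ha Hc Ht Heq.
  destruct (Rle_or_lt u (2 * c)) as [Hu | Hu]; [exact Hu | exfalso].
  unfold first_integral in Heq; rewrite Rplus_0_r in Heq.
  assert (Hgrowth : exp 2 * exp (t / c) < exp ((u + t) / c)).
  { rewrite <- exp_plus; apply exp_increasing.
    apply (Rmult_lt_reg_r c); [lra |].
    replace ((2 + t / c) * c) with (2 * c + t) by (field; lra).
    replace ((u + t) / c * c) with (u + t) by (field; lra). lra. }
  assert (Htime : a * exp (a / c) <= c * exp (t / c)).
  { replace (a * exp (a / c)) with (c * exp (a / c + ln (a / c))).
    - apply Rmult_le_compat_l; [lra |]. apply exp_le_compat.
      apply (Rmult_le_reg_r c); [lra |].
      replace ((a / c + ln (a / c)) * c) with (a + c * ln (a / c)) by (field; lra).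
      replace (t / c * c) with t by (field; lra). exact Ht.
    - rewrite exp_plus, exp_ln by (apply Rdiv_lt_0_compat; lra). field; lra. }
  assert (He2 : 1 < exp 2) by (pose proof (exp_ineq1 2); lra).
  pose proof (exp_pos (a / c)). pose proof (exp_pos (t / c)).
  assert (Hlhs : c * exp (t / c) < (u - c) * exp ((u + t) / c)).
  { apply Rlt_trans with (c * (exp 2 * exp (t / c))).
    { apply Rmult_lt_compat_l; [lra | nra]. }
    apply Rmult_gt_0_lt_compat; [apply Rmult_lt_0_compat; lra | lra | lra | exact Hgrowth]. }
  nra.
Qed.

Lemma ode_solution_right_limit (a c : R) (y : R -> R) :
  ode_solution a c y -> right_limit y 0 a.
Proof.
  intros [_ [Hcont _]] eps Heps.
  destruct (Hcont eps Heps) as [delta [Hdelta Hclose]].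
  exists delta; split; [exact Hdelta |].
  intros x Hx; apply Hclose; lra.
Qed.

Lemma ode_first_integral_derivative (c : R) (y : R -> R) (t : R) :
  c <> 0 -> y t <> 0 -> derivable_pt_lim y t (c / y t - 1) ->
  derivable_pt_lim (fun s => first_integral c (y s) s) t 0.
Proof.
  intros Hc Hy Hder.
  replace 0 with ((c / y t - 1) * exp ((y t + t) / c)
                  + (y t - c) * (exp ((y t + t) / c) * ((c / y t - 1 + 1) / c)))
    by (field; auto).
  exact (derivable_pt_lim_first_integral c y t _ Hc Hder).
Qed.

Lemma ode_first_integral_constant (a c : R) (y : R -> R) :
  c <> 0 -> ode_solution a c y ->
  forall s t, 0 < s <= t -> first_integral c (y s) s = first_integral c (y t) t.
Proof.
  intros Hc [_ [_ [Hnz Hder]]] s t [Hs Hst].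
  destruct (Rle_lt_or_eq_dec s t Hst) as [Hlt | ->]; [| reflexivity].
  destruct (MVT_cor2 (fun r => first_integral c (y r) r) (fun _ => 0) s t Hlt)
    as [r [Hmvt _]].
  - intros r Hr; apply ode_first_integral_derivative;
      [exact Hc | apply Hnz; lra | apply Hder; lra].
  - lra.
Qed.

Lemma ode_first_integral_conserved (a c : R) (y : R -> R) :
  0 < c -> ode_solution a c y ->
  forall t, 0 <= t -> first_integral c (y t) t = first_integral c a 0.
Proof.
  intros Hc Hsol t Ht.
  destruct (Rle_lt_or_eq_dec 0 t Ht) as [Htpos | <-];
    [| now destruct Hsol as [-> _]].
  set (K := first_integral c (y t) t).
  (* On (0, t] we have [first_integral c (y s) 0 = K * exp (- s / c)]; compare the right
     limits of both sides at 0. *)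
  assert (Hcont_a : continuity_pt (fun u => first_integral c u 0) a)
    by (unfold first_integral; reg).
  assert (Hcont_0 : continuity_pt (fun s => K * exp (- s / c)) 0) by reg.
  pose proof (right_limit_comp _ _ _ _ (ode_solution_right_limit _ _ _ Hsol) Hcont_a)
    as Hlim_left.
  pose proof (continuity_pt_right_limit _ _ Hcont_0) as Hlim_right.
  cbv beta in Hlim_left, Hlim_right.
  replace (K * exp (- 0 / c)) with K in Hlim_right
    by (replace (- 0 / c) with 0 by (field; lra); rewrite exp_0; ring).
  symmetry; apply (right_limit_unique _ _ 0 t _ _ Hlim_left Hlim_right Htpos).
  intros s Hs; unfold K.
  rewrite <- (ode_first_integral_constant a c y ltac:(lra) Hsol s t Hs).
  rewrite (first_integral_time_shift c (y s) s Hc), Rmult_assoc, <- exp_plus.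
  replace (s / c + - s / c) with 0 by (field; lra).
  rewrite exp_0; ring.
Qed.

Theorem lemma15 (a c : R) (y : R -> R) :
  0 < a -> 0 < c -> ode_solution a c y ->
  forall t, 0 <= t -> a + c * ln (a / c) <= t -> y t <= 2 * c.
Proof.
  intros Ha Hc Hsol t Ht0 Ht.
  apply (first_integral_le_2c a c (y t) t Ha Hc Ht).
  exact (ode_first_integral_conserved a c y Hc Hsol t Ht0).
Qed.
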